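(* For every odd integer $g\geqslant3$, the ideal $J_g^+\subset\mathbb{C}[\alpha,\gamma]$ is generated by $\zeta_g^+$ together with $\gamma J_{g-2}^+$. Moreover, $\gamma^i\zeta^+_{g-2i}\in J_g^+$ for all integers $i\geqslant0$.
   Context: $\zeta_k^+\in\mathbb{C}[\alpha,\gamma]$: $\zeta^+_i=0$ for $i<0$, $\zeta^+_0=1$, $\zeta^+_{k+1}=\alpha\zeta^+_k+16k^2\zeta^+_{k-1}+2k(k-1)\gamma\zeta^+_{k-2}$ for $k$ even and $\zeta^+_{k+1}=\alpha\zeta^+_k+2k(k-1)\gamma\zeta^+_{k-2}$ for $k$ odd ($k\geqslant0$) (the specialization at $\beta=8$ of $\zeta_{k+1}=\alpha\zeta_k+k^2(\beta+(-1)^k8)\zeta_{k-1}+2k(k-1)\gamma\zeta_{k-2}$); $J^+_k=(\zeta^+_k,\zeta^+_{k+1},\zeta^+_{k+2})$. *)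

From mathcomp Require Import all_boot all_algebra complex.
From mathcomp Require Import Rstruct.
Set Implicit Arguments. Unset Strict Implicit. Unset Printing Implicit Defensive.
Import GRing.Theory.
Local Open Scope ring_scope.

Definition Cx := complex Rdefinitions.R.

(* C[alpha, gamma] as {poly {poly C}}: alpha is the outer variable,
   gamma the inner one. *)
Definition P := {poly {poly Cx}}.
Definition alpha : P := 'X.
Definition gamma : P := ('X)%:P.

(* zt k = (zeta^+_{k-2}, zeta^+_{k-1}, zeta^+_k), with zeta^+_i = 0 for i < 0.
   Recurrence (beta = 8):
   zeta_{k+1} = alpha zeta_k + [k even] 16 k^2 zeta_{k-1} + 2k(k-1) gamma zeta_{k-2}. *)
Fixpoint zt (k : nat) : P * P * P :=
  match k with
  | 0 => (0, 0, 1)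
  | k'.+1 =>
      let: (a, b, c) := zt k' in
      (b, c, alpha * c + (if odd k' then 0 else (16 * k' ^ 2)%N%:R * b)
                + (2 * k' * (k' - 1))%N%:R * gamma * a)
  end.

Definition zeta (k : nat) : P := (zt k).2.

Definition zetaZ (k : int) : P :=
  match k with Posz n => zeta n | Negz _ => 0 end.

(* generators of J^+_k = (zeta_k, zeta_{k+1}, zeta_{k+2}) *)
Definition Jgens (k : nat) : seq P := [:: zeta k; zeta k.+1; zeta k.+2].

Definition in_ideal (R : comNzRingType) (s : seq R) (x : R) : Prop :=
  exists c : seq R, size c = size s /\ x = \sum_(i < size s) c`_i * s`_i.

From mathcomp Require Import all_boot all_algebra complex zify.
From mathcomp Require Import Rstruct.
Set Implicit Arguments.
Unset Strict Implicit.
Unset Printing Implicit Defensive.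

Import ComplexField GRing.Theory Num.Theory.
Local Open Scope ring_scope.

(* For odd g the recurrence reads zeta_{g+1} = alpha zeta_g + 2g(g-1) gamma zeta_{g-2}
   and zeta_{g+2} = alpha zeta_{g+1} + 16(g+1)^2 zeta_g + 2(g+1)g gamma zeta_{g-1}.
   The coefficients of gamma zeta_{g-2} and gamma zeta_{g-1} are nonzero integers,
   hence units of C[alpha, gamma], so this triangular change of generators turns
   (zeta_g, zeta_{g+1}, zeta_{g+2}) into (zeta_g, gamma zeta_{g-2}, gamma zeta_{g-1});
   adding gamma zeta_g changes nothing.  Thus gamma J_{g-2} is contained in J_g, and
   iterating down to J_1, below which all zeta vanish, gives gamma^i zeta_{g-2i} in J_g. *)

Section IdealOfSeq.

Variable R : comNzRingType.
Implicit Types (s : seq R) (a x y : R).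

Lemma in_ideal0 s : in_ideal s 0.
Proof.
exists (nseq (size s) 0); rewrite size_nseq; split=> //.
by rewrite big1 // => i _; rewrite nth_nseq if_same mul0r.
Qed.

Lemma in_idealD s x y : in_ideal s x -> in_ideal s y -> in_ideal s (x + y).
Proof.
move=> [c [_ ->]] [d [_ ->]]; exists (mkseq (fun i => c`_i + d`_i) (size s)).
rewrite size_mkseq -big_split; split=> //.
by apply: eq_bigr => i _; rewrite nth_mkseq // mulrDl.
Qed.

Lemma in_idealMl s a x : in_ideal s x -> in_ideal s (a * x).
Proof.
move=> [c [_ ->]]; exists (mkseq (fun i => a * c`_i) (size s)).
rewrite size_mkseq mulr_sumr; split=> //.
by apply: eq_bigr => i _; rewrite nth_mkseq // mulrA.
Qed.

Lemma in_idealB s x y : in_ideal s x -> in_ideal s y -> in_ideal s (x - y).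
Proof. by move=> sx sy; rewrite -mulN1r; apply: in_idealD => //; apply: in_idealMl. Qed.

Lemma in_ideal_nth s i : (i < size s)%N -> in_ideal s s`_i.
Proof.
move=> lt_i_s; exists (mkseq (fun j => (j == i)%:R) (size s)).
rewrite size_mkseq (bigD1 (Ordinal lt_i_s)) //= nth_mkseq // eqxx mul1r.
split=> //; rewrite big1 ?addr0 // => j.
by rewrite -val_eqE /= nth_mkseq // => /negbTE->; rewrite mul0r.
Qed.

Lemma in_ideal_mem s x : x \in s -> in_ideal s x.
Proof. by move=> xs; rewrite -(nth_index 0 xs); apply: in_ideal_nth; rewrite index_mem. Qed.

Lemma in_ideal_sub s t x :
  (forall y, y \in s -> in_ideal t y) -> in_ideal s x -> in_ideal t x.
Proof.
move=> sub_s_t [c [_ ->]]; apply: (big_ind (in_ideal t)).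
- exact: in_ideal0.
- exact: in_idealD.
- by move=> i _; apply/in_idealMl/sub_s_t/mem_nth.
Qed.

Lemma in_ideal_cons s a x : in_ideal s x -> in_ideal (a :: s) x.
Proof. by apply: in_ideal_sub => y ys; apply: in_ideal_mem; rewrite inE ys orbT. Qed.

Lemma in_ideal_map_mull s a x :
  in_ideal s x -> in_ideal [seq a * y | y <- s] (a * x).
Proof.
move=> [c [szc ->]]; exists c; rewrite size_map mulr_sumr; split=> //.
by apply: eq_bigr => i _; rewrite (nth_map 0) // mulrCA.
Qed.

End IdealOfSeq.

Ltac in_ideal_closure :=
  repeat first [ by apply: in_ideal_mem; rewrite !inE eqxx ?orbT
               | apply: in_idealB | apply: in_idealD | apply: in_idealMl ].

Lemma natr_unit (F : numFieldType) (R : unitRingType) (f : {rmorphism F -> R}) n :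
  (0 < n)%N -> n%:R \is a @GRing.unit R.
Proof. by move=> n_gt0; rewrite -(rmorph_nat f) fmorph_unit pnatr_eq0 -lt0n. Qed.

Lemma natr_unit_P n : (0 < n)%N -> (n%:R : P) \is a GRing.unit.
Proof. exact: (natr_unit (@polyC _ \o @polyC (complex Rdefinitions.R))). Qed.

Lemma zetaS n : zeta n.+1 = alpha * zeta n
  + (if odd n then 0 else (16 * n ^ 2)%N%:R * zeta n.-1)
  + (2 * n * (n - 1))%N%:R * gamma * zeta n.-2.
Proof.
case: n => [|[|n]]; rewrite /zeta /=; last by case: (zt n) => [[a b] c].
- by rewrite !mul0r !addr0.
- by rewrite !mul0r !addr0.
Qed.

Lemma Jgens_oddE g : odd g -> (2 < g)%N -> forall x,
  in_ideal (Jgens g) x <-> in_ideal (zeta g :: [seq gamma * y | y <- Jgens (g - 2)]) x.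
Proof.
case: g => [|[|n]] //= /negbNE odd_n _ x; rewrite !subSS subn0 /Jgens /=.
have [c1 c1_unit zeta3E] : exists2 c1 : P, c1 \is a GRing.unit &
    zeta n.+3 = alpha * zeta n.+2 + c1 * (gamma * zeta n).
  exists (2 * n.+2 * n.+1)%N%:R; first by apply: natr_unit_P; rewrite !muln_gt0.
  by rewrite zetaS /= odd_n addr0 subn1 mulrA.
have [c2 c2_unit zeta4E] : exists2 c2 : P, c2 \is a GRing.unit &
    zeta n.+4 = alpha * zeta n.+3 + (16 * n.+3 ^ 2)%N%:R * zeta n.+2
                + c2 * (gamma * zeta n.+1).
  exists (2 * n.+3 * n.+2)%N%:R; first by apply: natr_unit_P; rewrite !muln_gt0.
  by rewrite zetaS /= odd_n subn1 mulrA.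
split; apply: in_ideal_sub => y; rewrite !inE.
- by case/or3P=> /eqP->; rewrite ?zeta4E ?zeta3E; in_ideal_closure.
- case/or4P=> /eqP->; first by in_ideal_closure.
  + have -> : gamma * zeta n = c1^-1 * (zeta n.+3 - alpha * zeta n.+2).
      by rewrite zeta3E addrC addKr mulKr.
    by in_ideal_closure.
  + have -> : gamma * zeta n.+1 = c2^-1 * (zeta n.+4
        - (alpha * zeta n.+3 + (16 * n.+3 ^ 2)%N%:R * zeta n.+2)).
      by rewrite zeta4E addrC addKr mulKr.
    by in_ideal_closure.
  + by in_ideal_closure.
Qed.

Lemma gamma_mul_in_Jgens g x : odd g -> (2 < g)%N ->
  in_ideal (Jgens (g - 2)) x -> in_ideal (Jgens g) (gamma * x).
Proof.
move=> odd_g g_gt2 /(in_ideal_map_mull gamma)/(in_ideal_cons (zeta g)).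
exact: (Jgens_oddE odd_g g_gt2 _).2.
Qed.

Lemma gamma_exp_zeta_in_Jgens g i : odd g ->
  in_ideal (Jgens g) (gamma ^+ i * zetaZ (g%:Z - (2 * i)%N%:Z)).
Proof.
elim: i g => [|i IH] g odd_g.
  by rewrite muln0 subr0 mul1r; apply: in_ideal_mem; apply: mem_head.
case: g odd_g => [|[|[|n]]] // odd_n.
  have -> : 1%:Z - (2 * i.+1)%N%:Z = Negz (2 * i) by rewrite NegzE; lia.
  by rewrite mulr0; apply: in_ideal0.
have -> : n.+3%:Z - (2 * i.+1)%N%:Z = n.+1%:Z - (2 * i)%N%:Z by lia.
rewrite exprS -mulrA; apply: (gamma_mul_in_Jgens odd_n); first by [].
rewrite !subSS subn0; apply: IH.
by move: odd_n; rewrite /= negbK.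
Qed.

Theorem lemma5p8 (g : nat) : odd g -> (3 <= g)%N ->
  (forall x : P,
     in_ideal (Jgens g) x <->
     in_ideal (zeta g :: [seq gamma * y | y <- Jgens (g - 2)]) x)
  /\ (forall i : nat,
        in_ideal (Jgens g) (gamma ^+ i * zetaZ (g%:Z - (2 * i)%N%:Z))).
Proof.
move=> odd_g g_ge3; split; first exact: Jgens_oddE.
by move=> i; apply: gamma_exp_zeta_in_Jgens.
Qed.
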